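(* Let $S=\{(6,5),(0,1),(1,1),(3,3)\}$ with $c_{(3,3)}=2$ and $c_{(6,5)}=c_{(0,1)}=c_{(1,1)}=1$. Then for every $n\ge0$, $$\Delta_n=\frac{N_{S,C}(n,n)-1}{2^{n+1}}.$$ In particular $\Delta_n>0$ for all $n\ge3$.
   Context: A fair coin is flipped $n$ times, producing a sequence $x_1,\dots,x_n\in\{H,T\}$ of independent uniformly random outcomes. Alice's score is the number of indices $i\in\{1,\dots,n-1\}$ with $(x_i,x_{i+1})=(H,H)$; Bob's score is the number of indices $i\in\{1,\dots,n-1\}$ with $(x_i,x_{i+1})=(H,T)$. $\Delta_n$ is the probability that Bob's score strictly exceeds Alice's minus the probability that Alice's score strictly exceeds Bob's. Given finite $S\subset\mathbb Z_{\ge0}^2\setminus\{(0,0)\}$ and positive integers $C=\{c_s\}_{s\in S}$, a colored lattice path is a finite (possibly empty) sequence $((s_1,x_1),\dots,(s_m,x_m))$ with $s_i\in S$ and $x_i\in\{1,\dots,c_{s_i}\}$; its endpoint is $\sum_i s_i$. $N_{S,C}(a,b)$ denotes the number of colored lattice paths with endpoint $(a,b)$. *)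

From mathcomp Require Import all_boot all_order all_algebra.
Set Implicit Arguments. Unset Strict Implicit. Unset Printing Implicit Defensive.
Import Order.TTheory GRing.Theory Num.Theory.

(* true = H, false = T.  A sequence x_1..x_n is an n.-tuple bool, indexed from 0. *)
Definition alice_score (x : seq bool) : nat :=
  count (fun i => nth false x i && nth false x i.+1) (iota 0 (size x).-1).
Definition bob_score (x : seq bool) : nat :=
  count (fun i => nth false x i && ~~ nth false x i.+1) (iota 0 (size x).-1).

Definition Delta (n : nat) : rat :=
  ((#|[pred x : n.-tuple bool | (alice_score x < bob_score x)%N]|%:R
    - #|[pred x : n.-tuple bool | (bob_score x < alice_score x)%N]|%:R)
   / (2 ^+ n))%R.

(* S is given as a duplicate-free list of steps; c s is the number of colors of s.
   A colored step is a pair (s, x) with s \in S and 1 <= x <= c s. *)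
Definition colored_steps (S : seq (nat * nat)) (c : nat * nat -> nat)
  : seq ((nat * nat) * nat) :=
  [seq (s, x) | s <- S, x <- iota 1 (c s)].

Fixpoint words (T : Type) (L : seq T) (k : nat) : seq (seq T) :=
  if k is k'.+1 then [seq y :: w | y <- L, w <- words L k'] else [:: [::]].

Definition endpoint (p : seq ((nat * nat) * nat)) : nat * nat :=
  (\sum_(st <- p) st.1.1, \sum_(st <- p) st.1.2)%N.

(* Since (0,0) \notin S, every step increases a+b by at least 1,
   so every colored path with endpoint (a,b) has length <= a+b; hence counting
   paths of length <= a+b counts all of them. *)
Definition Npaths (S : seq (nat * nat)) (c : nat * nat -> nat) (a b : nat) : nat :=
  (\sum_(k < (a + b).+1)
     count (fun p => endpoint p == (a, b)) (words (colored_steps S c) k))%N.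

Definition S13 : seq (nat * nat) := [:: (6, 5); (0, 1); (1, 1); (3, 3)].
Definition c13 (s : nat * nat) : nat := if s == (3, 3) then 2 else 1.

(* Appending a flip changes a score only when the current last flip is H: a
   further H raises Alice's score, a T raises Bob's.  So the joint law of the two
   scores over sequences ending in H (resp. T) obeys a first-order recursion,
   solved by the binomial expressions [endH_count] and [endT_count].  It follows
   that the balance Phi_n = 2^n Delta_n is the number of sequences ending in H in
   which Bob leads by one, and that 2 Phi_n + 1 sequences of length n + 1 end in H
   with tied scores.  On the path side, the step polynomial of (S, C) is
   xy + y(1 + x^3 y^2)^2, so N(n, n) = sum_i C(2i, i) C(n - 2i, i), which is that
   same tie count. *)

From mathcomp Require Import all_boot all_order all_algebra.
From mathcomp Require Import zify ring.
Import Order.TTheory GRing.Theory Num.Theory.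

Fixpoint bool_seqs (n : nat) : seq (seq bool) :=
  if n is m.+1 then [seq rcons s b | s <- bool_seqs m, b <- [:: true; false]]
  else [:: [::]].

Lemma count_bool_seqsS (P : pred (seq bool)) n :
  count P (bool_seqs n.+1) =
  count (fun x => P (rcons x true)) (bool_seqs n)
  + count (fun x => P (rcons x false)) (bool_seqs n).
Proof.
rewrite [bool_seqs _]/=; elim: (bool_seqs n) => //= s l IH.
by rewrite IH addnACA addnA.
Qed.

Lemma big_bool_seqsS (R : Type) (idx : R) (op : Monoid.com_law idx)
    (F : seq bool -> R) n :
  \big[op/idx]_(x <- bool_seqs n.+1) F x =
  \big[op/idx]_(x <- bool_seqs n) op (F (rcons x true)) (F (rcons x false)).
Proof.
rewrite (big_allpairs_dep (r1 := bool_seqs n)); apply: eq_bigr => x _.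
by rewrite big_cons big_seq1.
Qed.

Lemma mem_bool_seqs n x : (x \in bool_seqs n) = (size x == n).
Proof.
elim: n x => [|n IH] x; first by case: x.
apply/allpairsP/eqP => [[[s b] /= [s_n _ ->]]|].
  by rewrite size_rcons; move: s_n; rewrite IH => /eqP ->.
case/lastP: x => [//|s b]; rewrite size_rcons => -[s_n].
by exists (s, b); rewrite /= IH s_n; case: b.
Qed.

Lemma uniq_bool_seqs n : uniq (bool_seqs n).
Proof.
elim: n => // n IH; apply: allpairs_uniq => // -[s b] [s' b'] _ _ /=.
by move/eqP; rewrite eqseq_rcons => /andP[/eqP -> /eqP ->].
Qed.

Lemma card_tuple_pred n (P : pred (seq bool)) :
  #|[pred x : n.-tuple bool | P x]| = count P (bool_seqs n).
Proof.
rewrite cardE /enum_mem size_filter -(count_map val P).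
apply/permP; apply: uniq_perm.
- rewrite map_inj_uniq; [exact: index_enum_uniq | exact: val_inj].
- exact: uniq_bool_seqs.
move=> x; rewrite mem_bool_seqs; apply/mapP/eqP => [[t _ ->]|x_n].
  exact: size_tuple.
by exists (Tuple (introT eqP x_n)); rewrite ?mem_index_enum.
Qed.

Lemma adjacent_count_rcons (f : bool -> bool -> bool) x b :
  count (fun i => f (nth false (rcons x b) i) (nth false (rcons x b) i.+1))
        (iota 0 (size (rcons x b)).-1)
  = count (fun i => f (nth false x i) (nth false x i.+1)) (iota 0 (size x).-1)
    + ((0 < size x) && f (last false x) b).
Proof.
case: x => [//|a x].
have : size (a :: x) = (size x).+1 by [].
move: (a :: x) (size x) => s k s_k.
have -> : (size (rcons s b)).-1 = k + 1 by rewrite size_rcons s_k addn1.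
rewrite s_k iotaD count_cat /= addn0; congr (_ + _).
  apply: eq_in_count => i; rewrite mem_iota add0n => /andP[_ lt_i].
  by rewrite !nth_rcons s_k ltnS (ltnW lt_i) ltnS lt_i.
rewrite [0 + k]add0n !nth_rcons s_k ltnS leqnn ltnn eqxx.
by rewrite -nth_last s_k.
Qed.

Lemma alice_score_rcons x b :
  alice_score (rcons x b) = alice_score x + (last false x && b).
Proof. by rewrite /alice_score adjacent_count_rcons; case: x. Qed.

Lemma bob_score_rcons x b :
  bob_score (rcons x b) = bob_score x + (last false x && ~~ b).
Proof.
by rewrite /bob_score (adjacent_count_rcons (fun u v => u && ~~ v)); case: x.
Qed.

Lemma count_split {T : Type} (a P : pred T) s :
  count P s = count (predI a P) s + count (predI (predC a) P) s.
Proof. by rewrite -!count_filter count_predC size_filter. Qed.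

(* [last false [::] = false]: the empty sequence counts as ending in T. *)
Definition ending_count n (h : bool) (R : nat -> nat -> bool) :=
  count (fun x => (last false x == h) && R (bob_score x) (alice_score x))
        (bool_seqs n).

Lemma eq_ending_count n h R R' :
  R =2 R' -> ending_count n h R = ending_count n h R'.
Proof. by move=> eqR; apply: eq_count => x; rewrite eqR. Qed.

Lemma ending_countS n h R :
  ending_count n.+1 h R =
  ending_count n false R + ending_count n true (fun b a => R (b + ~~ h) (a + h)).
Proof.
rewrite /ending_count count_bool_seqsS.
under eq_count do rewrite last_rcons alice_score_rcons bob_score_rcons.
under [X in _ + X]eq_count do rewrite last_rcons alice_score_rcons bob_score_rcons.
by case: h; rewrite /= ?count_pred0 ?addn0 ?add0n (count_split (fun x => ~~ last false x));
  congr (_ + _); apply: eq_count => x /=; case: (last false x); rewrite /= ?addn0.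
Qed.

Definition joint_count n h p q :=
  ending_count n h (fun b a => (b == p) && (a == q)).

Lemma joint_count_trueS n p q :
  joint_count n.+1 true p q =
  joint_count n false p q + (if q is q'.+1 then joint_count n true p q' else 0).
Proof.
rewrite /joint_count ending_countS /ending_count; congr (_ + _); case: q => [|q].
  by rewrite (@eq_count _ _ pred0) ?count_pred0 // => x; rewrite addn1 !andbF.
by apply: eq_count => x; rewrite addn1 addn0 eqSS.
Qed.

Lemma joint_count_falseS n p q :
  joint_count n.+1 false p q =
  joint_count n false p q + (if p is p'.+1 then joint_count n true p' q else 0).
Proof.
rewrite /joint_count ending_countS /ending_count; congr (_ + _); case: p => [|p].
  by rewrite (@eq_count _ _ pred0) ?count_pred0 // => x; rewrite addn1 andbF.
by apply: eq_count => x; rewrite addn1 addn0 eqSS.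
Qed.

(* A sequence of length n ending in H with p HT's and q HH's has p + q + 1 heads
   in p + 1 runs, giving 'C(p + q, p), and n - 1 - p - q tails filling the p
   gaps between runs and a possibly empty initial run, giving 'C(n.-1 - p - q, p). *)
Definition endH_count n p q :=
  if p + q < n then 'C(p + q, p) * 'C(n.-1 - p - q, p) else 0.

Definition endT_count n p q :=
  if p is p'.+1 then
    (if p + q <= n then 'C(p' + q, p') * 'C(n - p - q, p) else 0)
  else (q == 0 : nat).

Lemma endH_countS n p q :
  endH_count n.+1 p q = endT_count n p q + (if q is q'.+1 then endH_count n p q' else 0).
Proof.
rewrite /endH_count /endT_count.
case: q => [|q]; case: p => [|p]; rewrite ?addn0 ?add0n ?subn0 ?ltnS.
- by rewrite !bin0.
- by rewrite !binn; case: ifP.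
- by rewrite !bin0 /=; case: ifP.
case: (leqP (p.+1 + q.+1) n) => cmp; last first.
  by rewrite ifF //; lia.
have -> : p.+1 + q < n by lia.
have -> : n.-1 - p.+1 - q = n - p.+1 - q.+1 by lia.
by rewrite addnS binS mulnDl addnC addSnnS.
Qed.

Lemma endT_countS n p q :
  endT_count n.+1 p q = endT_count n p q + (if p is p'.+1 then endH_count n p' q else 0).
Proof.
rewrite /endH_count /endT_count.
case: p => [|p]; first by rewrite addn0.
case: (ltngtP (p + q) n) => cmp.
- have -> : p.+1 + q <= n.+1 by lia.
  have -> : n.+1 - p.+1 - q = (n - p.+1 - q).+1 by lia.
  have -> : n.-1 - p - q = n - p.+1 - q by lia.
  by rewrite binS mulnDr.
- by rewrite ifF //; lia.
- have -> : p.+1 + q <= n.+1 by lia.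
  have -> : n.+1 - p.+1 - q = 0 by lia.
  by rewrite bin0n muln0.
Qed.

Lemma joint_count_closed n p q :
  joint_count n true p q = endH_count n p q /\ joint_count n false p q = endT_count n p q.
Proof.
elim: n p q => [|n IH] p q.
  by split; rewrite /joint_count /= /endT_count; case: p => [|[]] //; case: q.
rewrite joint_count_trueS joint_count_falseS endH_countS endT_countS !(proj2 (IH _ _)).
by split; [case: q | case: p] => *; rewrite ?(proj1 (IH _ _)).
Qed.

Lemma count_partition {T : eqType} (P : pred T) (f : T -> nat) (s : seq T) (K : nat) :
  {in s, forall x, f x < K} ->
  count P s = \sum_(i < K) count (fun x => P x && (f x == i)) s.
Proof.
elim: s => [|y s IH] f_lt /=; first by rewrite big1.
rewrite big_split /= -IH => [|x s_x]; last by apply: f_lt; rewrite inE s_x orbT.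
congr (_ + _); have f_y : f y < K by apply: f_lt; rewrite inE eqxx.
rewrite (bigD1 (Ordinal f_y)) //= eqxx andbT big1 ?addn0 // => i ne_i.
rewrite (_ : f y == i = false) ?andbF //.
by apply: contraNF ne_i => /eqP f_i; apply/eqP/val_inj.
Qed.

Lemma alice_score_le x : alice_score x <= size x.
Proof. by rewrite (leq_trans (count_size _ _)) // size_iota leq_pred. Qed.

Lemma bob_score_le x : bob_score x <= size x.
Proof. by rewrite (leq_trans (count_size _ _)) // size_iota leq_pred. Qed.

Definition bob_lead_count n d := ending_count n true (fun b a => b == a + d).
Definition alice_lead_count n d := ending_count n true (fun b a => a == b + d).

Lemma bob_lead_count_sum n d K : n < K ->
  bob_lead_count n d = \sum_(q < K) endH_count n (q + d) q.
Proof.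
move=> n_lt_K; rewrite /bob_lead_count /ending_count.
rewrite (count_partition _ alice_score _ K) => [|x]; last first.
  by rewrite mem_bool_seqs => /eqP x_n; rewrite (leq_ltn_trans (alice_score_le x)) ?x_n.
apply: eq_bigr => q _; rewrite -(proj1 (joint_count_closed _ _ _)).
apply: eq_count => x.
by case: (eqVneq (alice_score x) q) => [->|ne]; rewrite ?eqxx ?(negbTE ne) ?andbT ?andbF.
Qed.

Lemma alice_lead_count_sum n d K : n < K ->
  alice_lead_count n d = \sum_(p < K) endH_count n p (p + d).
Proof.
move=> n_lt_K; rewrite /alice_lead_count /ending_count.
rewrite (count_partition _ bob_score _ K) => [|x]; last first.
  by rewrite mem_bool_seqs => /eqP x_n; rewrite (leq_ltn_trans (bob_score_le x)) ?x_n.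
apply: eq_bigr => p _; rewrite -(proj1 (joint_count_closed _ _ _)).
apply: eq_count => x.
by case: (eqVneq (bob_score x) p) => [->|ne]; rewrite ?eqxx ?(negbTE ne) ?andbT ?andbF.
Qed.

Lemma endH_count_lead1S n q :
  endH_count n.+1 q.+1 q = endH_count n q.+1 q + endH_count n q q.+1.
Proof.
rewrite /endH_count.
have binC : 'C(q.+1 + q, q.+1) = 'C(q + q.+1, q).
  by rewrite addSnnS -{1}(@bin_sub (q + q.+1) q) ?leq_addr // addKn.
case: (ltngtP (q.+1 + q) n) => cmp.
- have -> : q.+1 + q < n.+1 by lia.
  have -> : q + q.+1 < n by lia.
  rewrite -binC -mulnDr; congr (_ * _).
  have -> : n.+1.-1 - q.+1 - q = (n.-1 - q.+1 - q).+1 by lia.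
  by have -> : n.-1 - q - q.+1 = n.-1 - q.+1 - q by lia.
- by rewrite !ifF //; lia.
- have -> : q.+1 + q < n.+1 by lia.
  have -> : (q + q.+1 < n) = false by apply/negbTE; lia.
  have -> : n.+1.-1 - q.+1 - q = 0 by lia.
  by rewrite bin0n muln0.
Qed.

Lemma bob_lead_countS n :
  bob_lead_count n.+1 1 = bob_lead_count n 1 + alice_lead_count n 1.
Proof.
have lt_n : n < n.+2 by [].
rewrite (bob_lead_count_sum _ _ _ (ltnSn n.+1)) (bob_lead_count_sum _ _ _ lt_n).
rewrite (alice_lead_count_sum _ _ _ lt_n) -big_split.
by apply: eq_bigr => q _; rewrite !addn1 endH_count_lead1S.
Qed.

Section Balance.
Local Open Scope ring_scope.

Definition lead_sign (a b : nat) : int := (a < b)%N%:Z - (b < a)%N%:Z.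

Lemma lead_signS a b :
  lead_sign a.+1 b + lead_sign a b.+1 =
  2 * lead_sign a b - (b == a.+1)%N%:Z + (a == b.+1)%N%:Z.
Proof. by rewrite /lead_sign; lia. Qed.

Definition balance n : int :=
  \sum_(x <- bool_seqs n) lead_sign (alice_score x) (bob_score x).

Lemma count_intE {T : Type} (P : pred T) s :
  (count P s)%:Z = \sum_(x <- s) (P x : nat)%:Z.
Proof. by elim: s => [|x s IH]; rewrite ?big_nil // big_cons -IH. Qed.

Lemma balanceS n :
  balance n.+1 = 2 * balance n - (bob_lead_count n 1)%:Z + (alice_lead_count n 1)%:Z.
Proof.
rewrite /balance big_bool_seqsS /bob_lead_count /alice_lead_count /ending_count.
rewrite !count_intE mulr_sumr -sumrB -big_split; apply: eq_bigr => x _ /=.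
rewrite !alice_score_rcons !bob_score_rcons.
by case: (last false x) => /=; rewrite !addn0 ?addn1 ?lead_signS //; lia.
Qed.

Lemma balance_bob_lead n : balance n = (bob_lead_count n 1)%:Z.
Proof.
elim: n => [|n IH]; first by rewrite /balance big_seq1.
by rewrite balanceS IH bob_lead_countS PoszD; lia.
Qed.

Lemma balance_counts n :
  balance n = (count (fun x => alice_score x < bob_score x)%N (bool_seqs n))%:Z
              - (count (fun x => bob_score x < alice_score x)%N (bool_seqs n))%:Z.
Proof. by rewrite /balance !count_intE -sumrB. Qed.

Lemma Delta_balance n : Delta n = (balance n)%:~R / 2 ^+ n.
Proof.
rewrite /Delta (card_tuple_pred n (fun x => alice_score x < bob_score x)%N).
by rewrite (card_tuple_pred n (fun x => bob_score x < alice_score x)%N) balance_counts intrB.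
Qed.

End Balance.

Lemma endT_tie_count n :
  ending_count n false (fun b a => b == a) = (bob_lead_count n 1).+1.
Proof.
elim: n => [//|n IH]; rewrite ending_countS IH bob_lead_countS addSn.
by congr (_ + _).+1; apply: eq_ending_count => b a; rewrite addn0 addn1 eq_sym.
Qed.

Lemma endH_tie_countS n : bob_lead_count n.+1 0 = (2 * bob_lead_count n 1).+1.
Proof.
rewrite /bob_lead_count ending_countS (@eq_ending_count _ _ _ (fun b a => b == a));
  last by move=> b a; rewrite addn0.
rewrite endT_tie_count mul2n -addnn addSn; congr (_ + _).+1.
by apply: eq_ending_count => b a; rewrite !addn0 addn1.
Qed.

Local Notation poly2 := {poly {poly nat}}.

Definition xvar : poly2 := ('X%:P)%R.
Definition yvar : poly2 := 'X%R.
(* [yvar] is the outer variable: [coef2 p a b] is the coefficient of x^a y^b. *)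
Definition coef2 (p : poly2) (a b : nat) : nat := ((p`_b)`_a)%R.

Lemma coef2_XYM p a b i j :
  coef2 (xvar ^+ i * yvar ^+ j * p)%R a b =
  if (i <= a) && (j <= b) then coef2 p (a - i) (b - j) else 0.
Proof.
rewrite /coef2 /xvar /yvar -rmorphXn -mulrA coefCM coefXnM coefXnM.
by case: (ltnP b j) => _; rewrite ?coef0 ?andbF ?andbT //; case: ltnP.
Qed.

Lemma coef2_sum I (r : seq I) (F : I -> poly2) a b :
  coef2 (\sum_(i <- r) F i)%R a b = \sum_(i <- r) coef2 (F i) a b.
Proof. by rewrite /coef2 !coef_sum. Qed.

Lemma coef2_1 a b : coef2 1%R a b = (a == 0) && (b == 0).
Proof.
by rewrite /coef2 coef1; case: b => [|b] /=; rewrite ?coef1 ?coef0 ?andbF //; case: (a == 0).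
Qed.

Definition step_poly (L : seq ((nat * nat) * nat)) : poly2 :=
  (\sum_(st <- L) xvar ^+ st.1.1 * yvar ^+ st.1.2)%R.

Lemma count_allpairs_cons (T : Type) (P : pred (seq T)) L W :
  count P [seq y :: w | y <- L, w <- W] = \sum_(y <- L) count (fun w => P (y :: w)) W.
Proof.
by elim: L => [|y L IH]; rewrite ?big_nil // allpairs_cons count_cat count_map IH big_cons.
Qed.

Lemma count_words_endpoint L k a b :
  count (fun p => endpoint p == (a, b)) (words L k) = coef2 (step_poly L ^+ k)%R a b.
Proof.
elim: k a b => [|k IH] a b.
  by rewrite /= coef2_1 /endpoint !big_nil xpair_eqE addn0 ![_ == 0]eq_sym.
rewrite exprS /step_poly mulr_suml coef2_sum -/(step_poly L) /=.
rewrite count_allpairs_cons; apply: eq_bigr => y _.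
rewrite coef2_XYM -IH.
case: ifP => [/andP[le_a le_b]|not_le].
  apply: eq_count => w; rewrite /endpoint !big_cons !xpair_eqE.
  by rewrite -{1}(subnKC le_a) -{1}(subnKC le_b) !eqn_add2l.
rewrite (@eq_count _ _ pred0) ?count_pred0 // => w.
rewrite /endpoint !big_cons !xpair_eqE /=.
by apply/negbTE; apply: contraFN not_le => /andP[/eqP <- /eqP <-]; rewrite !leq_addr.
Qed.

Section StepPolynomial.
Local Open Scope ring_scope.

Lemma coef2_Mn p m a b : coef2 (p *+ m) a b = (coef2 p a b * m)%N.
Proof. by rewrite /coef2 !coefMn -mulr_natr natn. Qed.

Lemma coef2_monomial i j a b : coef2 (xvar ^+ i * yvar ^+ j) a b = (i == a) && (j == b).
Proof.
rewrite -[_ * _]mulr1 coef2_XYM coef2_1 !subn_eq0.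
by rewrite !eqn_leq; case: (i <= a)%N; case: (j <= b)%N; case: (a <= i)%N; case: (b <= j)%N.
Qed.

Lemma step_poly13 :
  step_poly (colored_steps S13 c13) = xvar * yvar + yvar * (xvar ^+ 3 * yvar ^+ 2 + 1) ^+ 2.
Proof. by rewrite /step_poly /=; rewrite !big_cons big_nil /=; ring. Qed.

Lemma coef2_step13_pow k n :
  coef2 ((xvar * yvar + yvar * (xvar ^+ 3 * yvar ^+ 2 + 1) ^+ 2) ^+ k) n n =
  (\sum_(i < k.+1) \sum_(j < (i + i).+1)
     'C(k, i) * 'C(i + i, j) * ((k - i + 3 * j == n) && (k + 2 * j == n)))%N.
Proof.
rewrite exprDn coef2_sum; apply: eq_bigr => -[i /= le_ik] _.
rewrite coef2_Mn [(yvar * _) ^+ i]exprMn -exprM mul2n -addnn exprD1n.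
rewrite !mulr_sumr coef2_sum big_distrl.
apply: eq_bigr => j _ /=; rewrite !mulrnAr coef2_Mn.
have -> : (xvar * yvar) ^+ (k - i) * (yvar ^+ i * (xvar ^+ 3 * yvar ^+ 2) ^+ j) =
          xvar ^+ (k - i + 3 * j) * yvar ^+ (k - i + i + 2 * j).
  by rewrite !exprMn !exprD; ring.
by rewrite (coef2_monomial (k - i + 3 * j)) subnK // [RHS]mulnC mulnA mulnAC.
Qed.

End StepPolynomial.

Lemma sum_ord_delta (F : nat -> nat) m N :
  m < N -> \sum_(j < N) F j * (j == m :> nat) = F m.
Proof.
move=> lt_m; rewrite (bigD1 (Ordinal lt_m)) //= eqxx muln1 big1 ?addn0 // => j ne_j.
rewrite (_ : (j == m :> nat) = false) ?muln0 //.
by apply: contraNF ne_j => /eqP j_m; apply/eqP/val_inj.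
Qed.

Lemma sum_ord_narrow (F : nat -> nat) a b :
  a <= b -> (forall i, a <= i < b -> F i = 0) -> \sum_(i < b) F i = \sum_(i < a) F i.
Proof.
move=> le_ab F0; rewrite (big_ord_widen _ _ le_ab) [RHS]big_mkcond /=.
by apply: eq_bigr => i _; case: ltnP => // le_a; rewrite F0 // le_a ltn_ord.
Qed.

Definition central_sum n := \sum_(i < n.+1) 'C(i + i, i) * 'C(n - (i + i), i).

Lemma count_words13 k n :
  count (fun p => endpoint p == (n, n)) (words (colored_steps S13 c13) k) =
  \sum_(i < k.+1) 'C(k, i) * 'C(i + i, i) * (k + i + i == n).
Proof.
rewrite count_words_endpoint step_poly13 coef2_step13_pow.
apply: eq_bigr => -[i /= le_ik] _.
(* For i <= k the exponent equations k - i + 3j = n and k + 2j = n force j = i. *)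
rewrite -(@sum_ord_delta (fun j => 'C(k, i) * 'C(i + i, j) * (k + i + i == n)) i (i + i).+1)
  ?ltnS ?leq_addr //.
apply: eq_bigr => j _; case: (eqVneq (j : nat) i) => [->|ne_j].
  have -> : (k - i + 3 * i == n) && (k + 2 * i == n) = (k + i + i == n) by lia.
  by rewrite muln1.
have -> : (k - i + 3 * j == n) && (k + 2 * j == n) = false by lia.
by rewrite !muln0.
Qed.

Lemma binomial_tail_eq0 n i : n < i + i -> 'C(n - (i + i), i) = 0.
Proof. by move=> lt_n; rewrite (_ : n - _ = 0) ?bin0n; [case: i lt_n | lia]. Qed.

Lemma sum_diag_binomial n i :
  \sum_(k < (n + n).+1) 'C(k, i) * 'C(i + i, i) * (k + i + i == n) =
  'C(i + i, i) * 'C(n - (i + i), i).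
Proof.
case: (leqP (i + i) n) => [le_in|lt_ni].
  rewrite mulnC -(@sum_ord_delta (fun k => 'C(k, i) * 'C(i + i, i)) (n - (i + i)) (n + n).+1);
    last by lia.
  by apply: eq_bigr => k _; congr (_ * _); apply/eqP/eqP; lia.
rewrite binomial_tail_eq0 // muln0 big1 // => k _.
by rewrite (_ : k + i + i == n = false) ?muln0 //; lia.
Qed.

Lemma Npaths13 n : Npaths S13 c13 n n = central_sum n.
Proof.
rewrite /Npaths /central_sum.
rewrite -(@sum_ord_narrow (fun i => 'C(i + i, i) * 'C(n - (i + i), i)) n.+1 (n + n).+1);
  last 2 first.
- by rewrite ltnS leq_addr.
- by move=> i /andP[lt_ni _]; rewrite binomial_tail_eq0 ?muln0 //; lia.
under eq_bigr => k _.
  rewrite count_words13.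
  rewrite -(@sum_ord_narrow (fun i => 'C(k, i) * 'C(i + i, i) * (k + i + i == n))
              k.+1 (n + n).+1) //;
    last by move=> i /andP[lt_ki _]; rewrite bin_small ?mul0n.
  over.
by rewrite exchange_big; apply: eq_bigr => i _; rewrite sum_diag_binomial.
Qed.

Lemma central_sum_endH_tie n : central_sum n = bob_lead_count n.+1 0.
Proof.
rewrite (bob_lead_count_sum _ _ _ (ltnSn n.+1)).
rewrite (@sum_ord_narrow (fun q => endH_count n.+1 (q + 0) q) n.+1 n.+2) // => [|i].
  apply: eq_bigr => q _; rewrite /endH_count addn0 ltnS -subnDA.
  by case: leqP => // lt_nq; rewrite binomial_tail_eq0 ?muln0.
by move=> /andP[le_i _]; rewrite /endH_count ifF //; lia.
Qed.

Lemma central_sum_ge3 {n} : 3 <= n -> 3 <= central_sum n.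
Proof.
case: n => [|[|[|m]]] // _; rewrite /central_sum !big_ord_recl /= !bin0 !bin1.
by rewrite /bump /= (_ : m.+3 - 2 = m.+1) ?bin1; lia.
Qed.

Local Open Scope ring_scope.

Theorem mainTheorem13 :
  (forall n : nat,
     Delta n = ((Npaths S13 c13 n n)%:R - 1) / 2 ^+ n.+1 :> rat) /\
  (forall n : nat, (3 <= n)%N -> 0 < Delta n).
Proof.
have Npaths_balance n : (Npaths S13 c13 n n)%:R = 2 * (balance n)%:~R + 1 :> rat.
  by rewrite Npaths13 central_sum_endH_tie endH_tie_countS balance_bob_lead -addn1 natrD natrM.
split=> [n|n le3n]; rewrite Delta_balance.
  by rewrite Npaths_balance exprS addrK -mulf_div divff ?mul1r.
apply: divr_gt0; rewrite ?exprn_gt0 // ltr0z balance_bob_lead ltz_nat.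
have := central_sum_ge3 le3n; rewrite central_sum_endH_tie endH_tie_countS; lia.
Qed.
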